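(* Let $K\ge2$ and $0<t_0<t_K$ be fixed and put $t_{K-1}:=t_0(t_K/t_0)^{(K-1)/K}$. Among all choices of points $t_0<t_1<\dots<t_{K-2}<t_{K-1}$ (with $t_{K-1}$ and $t_K$ as fixed above), the choice $t_k=t_0(t_K/t_0)^{k/K}$, $1\le k\le K-2$, minimizes $$C_{\mathrm{disc}}=\sum_{k=1}^{K-1}\max\{0,(t_{k+1}-t_k)-(t_k-t_{k-1})\}\frac{1}{t_k}+\frac{t_1-t_0}{t_0}.$$
   Context: The discretization $t_k=t_0(t_K/t_0)^{k/K}$, $0\le k\le K$, is called the log-SNR adapted discretization (it satisfies $t_{k+1}=e^{\Delta}t_k$ with $\Delta=\frac1K\log\frac{t_K}{t_0}$). *)

From Stdlib Require Import Reals Lra Lia.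
Open Scope R_scope.

Definition geom (t0 tK : R) (K k : nat) : R :=
  t0 * Rpower (tK / t0) (INR k / INR K).

Definition Cdisc (K : nat) (t : nat -> R) : R :=
  sum_f 1 (K - 1)
    (fun k => Rmax 0 ((t (S k) - t k) - (t k - t (pred k))) * / t k)
  + (t 1%nat - t 0%nat) / t 0%nat.

From Stdlib Require Import Reals Lra Lia.
Open Scope R_scope.

(* Dropping the [max 0] can only lower C_disc, and on the geometric grid, which is
   convex, nothing is lost.  Without the max, C_disc equals
   sum_{i < K-1} (r_i + 1/r_i) + t_K/t_{K-1} - 2K + 1 with r_i = t_{i+1}/t_i, where the
   last term is fixed.  Since sum_i ln r_i = ln (t_{K-1}/t_0) is fixed as well, the
   tangent line of u |-> e^u + e^-u at the common value Delta = ln (t_K/t_0) / K bounds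
   the sum below by its value at r_i = e^Delta, i.e. on the geometric grid. *)


Lemma sum_f_R0_telescope (f : nat -> R) (n : nat) :
  sum_f_R0 (fun i => f (S i) - f i) n = f (S n) - f 0%nat.
Proof. induction n as [|n IHn]; simpl; [ring | rewrite IHn; ring]. Qed.

Lemma sum_f_R0_shift (f : nat -> R) (n : nat) :
  sum_f_R0 (fun i => f (S i)) n + f 0%nat = sum_f_R0 f n + f (S n).
Proof. rewrite <- tech5, (decomp_sum f (S n)) by lia; simpl; ring. Qed.

Lemma exp_ge_tangent (L u : R) : exp L * (1 + (u - L)) <= exp u.
Proof.
  replace (exp u) with (exp L * exp (u - L)) by (rewrite <- exp_plus; f_equal; ring).
  apply Rmult_le_compat_l; [left; apply exp_pos | apply exp_ineq1_le].
Qed.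

Lemma exp_add_exp_opp_ge_tangent (L u : R) :
  exp L + exp (- L) + (exp L - exp (- L)) * (u - L) <= exp u + exp (- u).
Proof.
  pose proof (exp_ge_tangent L u); pose proof (exp_ge_tangent (- L) (- u)); nra.
Qed.

Lemma ratio_add_inv_ge_tangent (L a b : R) : 0 < a -> 0 < b ->
  exp L + exp (- L) + (exp L - exp (- L)) * (ln b - ln a - L) <= b / a + a / b.
Proof.
  intros Ha Hb.
  assert (Eu : exp (ln b - ln a) = b / a).
  { unfold Rminus, Rdiv; rewrite exp_plus, exp_Ropp, !exp_ln; auto. }
  assert (Emu : exp (- (ln b - ln a)) = a / b).
  { rewrite exp_Ropp, Eu; field; lra. }
  rewrite <- Eu, <- Emu; apply exp_add_exp_opp_ge_tangent.
Qed.

Definition ratio_sum (n : nat) (t : nat -> R) : R :=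
  sum_f_R0 (fun i => t (S i) / t i + t i / t (S i)) n.

Lemma ratio_sum_ge (n : nat) (t : nat -> R) (L : R) :
  (forall k, (k <= S n)%nat -> 0 < t k) ->
  ln (t (S n)) - ln (t 0%nat) = INR (S n) * L ->
  INR (S n) * (exp L + exp (- L)) <= ratio_sum n t.
Proof.
  intros Hpos Hlog.
  set (c := exp L - exp (- L)).
  (* Sum the tangent bounds at [L]; their linear parts telescope to zero. *)
  apply Rle_trans with
    (sum_f_R0 (fun i => exp L + exp (- L) + c * (ln (t (S i)) - ln (t i) - L)) n).
  - right.
    rewrite plus_sum, sum_cte.
    replace (sum_f_R0 _ n)
      with (c * (sum_f_R0 (fun i => ln (t (S i)) - ln (t i)) n - INR (S n) * L)).
    + rewrite (sum_f_R0_telescope (fun k => ln (t k))), Hlog; ring.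
    + rewrite (Rmult_comm (INR (S n))), <- sum_cte, <- minus_sum, scal_sum.
      apply sum_eq; intros; ring.
  - apply sum_Rle; intros i Hi; apply ratio_add_inv_ge_tangent; apply Hpos; lia.
Qed.

Lemma ratio_sum_geometric (n : nat) (t : nat -> R) (L : R) :
  (forall k, 0 < t k) -> (forall k, t (S k) = exp L * t k) ->
  ratio_sum n t = INR (S n) * (exp L + exp (- L)).
Proof.
  intros Hpos Hstep.
  unfold ratio_sum; rewrite Rmult_comm, <- sum_cte.
  apply sum_eq; intros i _.
  rewrite Hstep, exp_Ropp; pose proof (Hpos i); pose proof (exp_pos L); field; lra.
Qed.

Definition second_diff (t : nat -> R) (k : nat) : R :=
  (t (S k) - t k) - (t k - t (pred k)).

Definition Cdisc_relaxed (K : nat) (t : nat -> R) : R :=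
  sum_f 1 (K - 1) (fun k => second_diff t k * / t k) + (t 1%nat - t 0%nat) / t 0%nat.

Lemma Cdisc_relaxed_le (K : nat) (t : nat -> R) : (2 <= K)%nat ->
  (forall k, (k < K)%nat -> 0 < t k) -> Cdisc_relaxed K t <= Cdisc K t.
Proof.
  intros HK Hpos.
  unfold Cdisc_relaxed, Cdisc, sum_f.
  apply Rplus_le_compat_r, sum_Rle; intros i Hi.
  apply Rmult_le_compat_r; [left; apply Rinv_0_lt_compat, Hpos; lia | apply Rmax_r].
Qed.

Lemma Cdisc_relaxed_eq (K : nat) (t : nat -> R) : (2 <= K)%nat ->
  (forall k, (1 <= k <= K - 1)%nat -> 0 <= second_diff t k) ->
  Cdisc K t = Cdisc_relaxed K t.
Proof.
  intros HK Hconv.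
  unfold Cdisc_relaxed, Cdisc, sum_f.
  f_equal; apply sum_eq; intros i Hi.
  rewrite Rmax_right; [reflexivity | apply Hconv; lia].
Qed.

Lemma Cdisc_relaxed_ratio_sum (n : nat) (t : nat -> R) :
  (forall k, (k <= S n)%nat -> 0 < t k) ->
  Cdisc_relaxed (S (S n)) t = ratio_sum n t + t (S (S n)) / t (S n) - 2 * INR (S n) - 1.
Proof.
  intros Hpos.
  unfold Cdisc_relaxed, sum_f, ratio_sum.
  replace (S (S n) - 1 - 1)%nat with n by lia.
  rewrite (sum_eq _ (fun i => t (S (S i)) / t (S i) + t i / t (S i) - 2)).
  - rewrite minus_sum, plus_sum, sum_cte.
    replace ((t 1%nat - t 0%nat) / t 0%nat) with (t 1%nat / t 0%nat - 1)
      by (pose proof (Hpos 0%nat ltac:(lia)); field; lra).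
    pose proof (sum_f_R0_shift (fun i => t (S i) / t i) n) as Hshift; simpl in Hshift.
    rewrite plus_sum; lra.
  - intros i Hi; rewrite Nat.add_1_r; unfold second_diff; simpl pred.
    pose proof (Hpos (S i) ltac:(lia)); field; lra.
Qed.

Lemma second_diff_geometric_nonneg (t : nat -> R) (r : R) (k : nat) :
  (forall i, 0 < t i) -> (forall i, t (S i) = r * t i) -> (1 <= k)%nat ->
  0 <= second_diff t k.
Proof.
  intros Hpos Hstep Hk; destruct k as [|k]; [lia|].
  unfold second_diff; simpl pred; rewrite !Hstep.
  replace (r * (r * t k) - r * t k - (r * t k - t k)) with (t k * (r - 1) ^ 2) by ring.
  apply Rmult_le_pos; [left; apply Hpos | apply pow2_ge_0].
Qed.

Lemma increasing_pos (t : nat -> R) (m : nat) : 0 < t 0%nat ->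
  (forall k, (k < m)%nat -> t k < t (S k)) -> forall k, (k <= m)%nat -> 0 < t k.
Proof.
  intros H0 Hincr k; induction k as [|k IHk]; intros Hk; [exact H0|].
  specialize (Hincr k ltac:(lia)); specialize (IHk ltac:(lia)); lra.
Qed.

Definition log_snr_step (t0 tK : R) (K : nat) : R := ln (tK / t0) / INR K.

Section Geometric.

Variables (t0 tK : R) (K : nat).
Hypotheses (Ht0 : 0 < t0) (HtK : 0 < tK).

Let g := geom t0 tK K.
Let Delta := log_snr_step t0 tK K.

Lemma geom_exp (k : nat) : g k = t0 * exp (INR k * Delta).
Proof. unfold g, Delta, geom, log_snr_step, Rpower; f_equal; f_equal; unfold Rdiv; ring. Qed.

Lemma geom_pos (k : nat) : 0 < g k.
Proof. rewrite geom_exp; apply Rmult_lt_0_compat; [exact Ht0 | apply exp_pos]. Qed.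

Lemma geom_succ (k : nat) : g (S k) = exp Delta * g k.
Proof. rewrite !geom_exp, S_INR, Rmult_plus_distr_r, Rmult_1_l, exp_plus; ring. Qed.

Lemma ln_geom (k : nat) : ln (g k) = ln t0 + INR k * Delta.
Proof. rewrite geom_exp, ln_mult, ln_exp; [reflexivity | exact Ht0 | apply exp_pos]. Qed.

Lemma geom_last : (K <> 0)%nat -> g K = tK.
Proof.
  intros HK; apply not_0_INR in HK.
  rewrite geom_exp; unfold Delta, log_snr_step.
  replace (INR K * (ln (tK / t0) / INR K)) with (ln (tK / t0)) by (field; exact HK).
  rewrite exp_ln; [field; lra | apply Rdiv_lt_0_compat; assumption].
Qed.

End Geometric.

Theorem lemma5 (K : nat) (t0 tK : R) (t : nat -> R) :
  (2 <= K)%nat -> 0 < t0 -> t0 < tK ->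
  t 0%nat = t0 ->
  t (K - 1)%nat = geom t0 tK K (K - 1) ->
  t K = tK ->
  (forall k : nat, (k < K - 1)%nat -> t k < t (S k)) ->
  Cdisc K (geom t0 tK K) <= Cdisc K t.
Proof.
  intros HK Ht0 Ht0K Hfirst Hpenult Hlast Hincr.
  assert (Htpos : forall k, (k < K)%nat -> 0 < t k).
  { intros k Hk; apply (increasing_pos t (K - 1)); [lra | exact Hincr | lia]. }
  destruct K as [|[|n]]; [lia | lia |].
  replace (S (S n) - 1)%nat with (S n) in * by lia.
  set (g := geom t0 tK (S (S n))) in *.
  set (Delta := log_snr_step t0 tK (S (S n))).
  assert (Hgpos : forall k, 0 < g k) by (intros; apply geom_pos; lra).
  assert (Hgstep : forall k, g (S k) = exp Delta * g k) by (intros; apply geom_succ; lra).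
  assert (Hgconvex : forall k, (1 <= k <= S n)%nat -> 0 <= second_diff g k).
  { intros k Hk; apply (second_diff_geometric_nonneg g (exp Delta)); auto; lia. }
  assert (Hratios : INR (S n) * (exp Delta + exp (- Delta)) <= ratio_sum n t).
  { apply ratio_sum_ge; [intros; apply Htpos; lia |].
    rewrite Hpenult, Hfirst; unfold g; rewrite ln_geom by lra; fold Delta; ring. }
  rewrite (Cdisc_relaxed_eq _ g HK Hgconvex), Cdisc_relaxed_ratio_sum by auto.
  eapply Rle_trans; [| apply Cdisc_relaxed_le; [exact HK | exact Htpos]].
  rewrite Cdisc_relaxed_ratio_sum by (intros; apply Htpos; lia).
  rewrite (ratio_sum_geometric n g Delta Hgpos Hgstep).
  unfold g at 1; rewrite geom_last, <- Hlast, <- Hpenult by (lra || lia).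
  lra.
Qed.
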